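(* Let $w_g$ be the number of weakly admissible compositions of $g$ whose maximal part is at least $6$. Then $\limsup_{g\to\infty}w_g^{1/g}<\omega=\frac{1+\sqrt5}2$. In particular, the number of NSG-compositions of genus $g$ with maximum at least $6$ has growth-rate strictly smaller than $\omega$.
   Context: A composition $x_1+\cdots+x_{m-1}$ with last maximal part $x_l$ (i.e. $x_1,\dots,x_{l-1}\le x_l$ and $x_{l+1},\dots,x_{m-1}<x_l$) is weakly admissible if $x_l\le x_i+x_{l-i}$ for $1\le i\le l-1$ and $x_l\le 1+x_{l+i}+x_{m-i}$ for $1\le i\le m-1-l$. An NSG-composition is a composition $x_1+\cdots+x_{m-1}$ satisfying $x_{s+t}\le x_s+x_t$ and $x_{m-s-t}\le x_{m-s}+x_{m-t}+1$ for all $s,t\ge1$, $s+t<m$ (equivalently, the Kunz vector $x_j=\#((\mathbb N\setminus S)\cap(j+m\mathbb Z))$ of a numerical semigroup $S$ of multiplicity $m$); its genus is $\sum x_j$. The growth-rate of a family of compositions is $\limsup_{g\to\infty}a_g^{1/g}$ where $a_g$ is the number of members of genus (sum) $g$. *)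

From mathcomp Require Import all_boot all_order all_algebra.
From mathcomp Require Import all_classical all_reals all_analysis.
Set Implicit Arguments. Unset Strict Implicit. Unset Printing Implicit Defensive.

(* A composition x_1 + ... + x_{m-1} is a list s = [:: x_1; ...; x_{m-1}]
   of positive naturals; m = size s + 1. Parts are indexed from 1. *)
Definition part (s : seq nat) (j : nat) : nat := nth 0 s j.-1.

Fixpoint comps_fuel (f n : nat) : seq (seq nat) :=
  if n is 0 then [:: [::]] else
  match f with
  | 0 => [::]
  | f'.+1 => flatten [seq [seq k :: t | t <- comps_fuel f' (n - k)] | k <- iota 1 n]
  end.
Definition compositions (n : nat) : seq (seq nat) := comps_fuel n n.

Definition maxpart (s : seq nat) : nat := \max_(i <- s) i.

Definition lastmax (s : seq nat) : nat :=
  \max_(1 <= j < (size s).+1 | part s j == maxpart s) j.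

Definition weakly_admissible (s : seq nat) : Prop :=
  let m := (size s).+1 in
  let l := lastmax s in
  (forall i, 1 <= i <= l - 1 -> part s l <= part s i + part s (l - i)) /\
  (forall i, 1 <= i <= m - 1 - l ->
      part s l <= 1 + part s (l + i) + part s (m - i)).

Definition nsg_composition (s : seq nat) : Prop :=
  let m := (size s).+1 in
  forall a b, 1 <= a -> 1 <= b -> a + b < m ->
    part s (a + b) <= part s a + part s b /\
    part s (m - a - b) <= part s (m - a) + part s (m - b) + 1.

Definition w_count (g : nat) : nat :=
  count (fun s => asbool (weakly_admissible s) && (6 <= maxpart s)) (compositions g).

Definition nsg_count (g : nat) : nat :=
  count (fun s => asbool (nsg_composition s) && (6 <= maxpart s)) (compositions g).

Local Open Scope ring_scope.
Definition growth_rate (R : realType) (a : nat -> nat) : \bar R :=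
  limn_esup (fun g : nat => (((a g)%:R : R) `^ (g%:R^-1))%:E).

Definition golden (R : realType) : R := (1 + Num.sqrt 5) / 2.

(* Cut a weakly admissible composition at its last maximal part [M >= 6]:
   the prefix has parts in [1, M] and each part plus its mirror part is at
   least [M]; the suffix has the same shape with bound [M - 1] (these are
   the "mirror-bounded" sequences).  Peeling off outermost pairs shows that
   mirror-bounded sequences of sum [n] number at most [(2/e) z^-n] as soon
   as the generating weight [pair_weight z T] of the admissible outer pairs
   is at most [1 - e]; this holds with [z = 5/8] for [T >= 6] and with
   [z = 13/21] for [T >= 5].  Summing over the maximum and the split point
   gives [w_g <= K (21/13)^g], so the growth rate is at most
   [55/34 < (1 + sqrt 5)/2].  NSG-compositions are weakly admissible, so the
   same bound applies to them. *)

From mathcomp Require Import all_boot all_order all_algebra.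
From mathcomp Require Import all_classical all_reals all_analysis.
From mathcomp Require Import zify ring lra.
Set Implicit Arguments. Unset Strict Implicit. Unset Printing Implicit Defensive.

Lemma comps_fuel_mem f n s :
  s \in comps_fuel f n -> all (fun x => 0 < x) s /\ sumn s = n.
Proof.
elim: f n s => [|f IH] [|n] s //; try by rewrite inE => /eqP->.
case/flatten_mapP=> k; rewrite mem_iota => /andP[k1 kn] /mapP[t /IH[t_pos t_sum] ->] /=.
by rewrite t_pos t_sum andbT; split => //; lia.
Qed.

Lemma comps_fuel_uniq f n : uniq (comps_fuel f n).
Proof.
elim: f n => [|f IH] [|n] //.
apply: allpairs_uniq_dep => //; first exact: iota_uniq.
by move=> [a t] [b u] _ _ /= [-> ->].
Qed.

Lemma size_le_sumn (s : seq nat) : all (fun x => 0 < x) s -> size s <= sumn s.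
Proof. by elim: s => //= a s IH /andP[a0 /IH]; lia. Qed.

Definition mirror_bounded (T : nat) (s : seq nat) : bool :=
  all (fun x => 0 < x <= T) s &&
  all (fun p : nat * nat => T <= p.1 + p.2) (zip s (rev s)).

Lemma mirror_bounded_cons_rcons T a b t :
  mirror_bounded T (a :: rcons t b) =
  [&& 0 < a <= T, 0 < b <= T, T <= a + b & mirror_bounded T t].
Proof.
rewrite /mirror_bounded rev_cons rev_rcons rcons_cons /= zip_rcons ?size_rev //.
rewrite !all_rcons /= (addnC b a).
by case: (0 < a <= T); case: (0 < b <= T); case: (T <= a + b);
   case: (all _ t); case: (all _ (zip _ _)).
Qed.

Lemma mirror_pairsP T (s : seq nat) :
  (forall i, i < size s -> T <= nth 0 s i + nth 0 s (size s - i.+1)) ->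
  all (fun p : nat * nat => T <= p.1 + p.2) (zip s (rev s)).
Proof.
move=> H; apply/(all_nthP (0, 0)) => i; rewrite size_zip size_rev minnn => lt_i.
by rewrite nth_zip ?size_rev // nth_rev //=; exact: H.
Qed.

Definition outer_pairs (T : nat) : seq (nat * nat) :=
  [seq p <- [seq (a, b) | a <- iota 1 T, b <- iota 1 T] | T <= p.1 + p.2].

(* A list containing every mirror-bounded sequence of sum [n] and size at
   most [f.+1]: strip the outermost pair and recurse (lengths 0 and 1 are
   covered by the two base entries, which are not checked for validity). *)
Fixpoint mirror_enum (T f n : nat) : seq (seq nat) :=
  [:: [::]; [:: n]] ++
  if f is f'.+1 then
    flatten [seq [seq p.1 :: rcons t p.2 | t <- mirror_enum T f' (n - (p.1 + p.2))]
            | p <- outer_pairs T & p.1 + p.2 <= n]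
  else [::].

Lemma mem_mirror_enum T f s :
  size s <= f.+1 -> mirror_bounded T s -> s \in mirror_enum T f (sumn s).
Proof.
elim: f s => [|f IH] s.
  by case: s => [|a [|b s]] //= _ _; rewrite !inE ?addn0 eqxx ?orbT.
case: s => [|a s]; first by rewrite inE eqxx.
case/lastP: s => [|t b]; first by rewrite /= !inE addn0 eqxx orbT.
rewrite /= size_rcons mirror_bounded_cons_rcons => size_t /and4P[Ha Hb Hab Ht].
rewrite !inE; apply/orP; right; apply/orP; right.
apply/flatten_mapP; exists (a, b).
  rewrite mem_filter /= sumn_rcons mem_filter /= Hab; apply/andP; split; first lia.
  by apply/allpairsP; exists (a, b); rewrite !mem_iota; split => //; lia.
apply/mapP; exists t => //=.
by rewrite sumn_rcons (_ : _ - _ = sumn t) ?IH //; lia.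
Qed.

Lemma size_mirror_enum T f n :
  size (mirror_enum T f.+1 n) =
  (\sum_(p <- outer_pairs T | p.1 + p.2 <= n)
     size (mirror_enum T f (n - (p.1 + p.2)))).+2.
Proof.
rewrite /= size_flatten /shape -map_comp sumnE big_map big_filter.
by congr _.+2; apply: eq_bigr => p _ /=; rewrite size_map.
Qed.

Lemma bigmax_attained (r : seq nat) (P : pred nat) :
  let l := \max_(i <- r | P i) i in l = 0 \/ l \in r /\ P l.
Proof.
rewrite /= big_seq_cond.
apply: (big_ind (fun x => x = 0 \/ x \in r /\ P x)); first by left.
  by move=> x y Hx Hy; case: (leqP x y) => _; [exact: Hy | exact: Hx].
by move=> i /andP[ir Pi]; right.
Qed.

Lemma leq_maxpart (s : seq nat) x : x \in s -> x <= maxpart s.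
Proof. by move=> xs; apply: leq_bigmax_seq. Qed.

Lemma part_le_maxpart (s : seq nat) j : 1 <= j <= size s -> part s j <= maxpart s.
Proof. by case/andP=> j1 js; rewrite leq_maxpart // /part mem_nth // prednK. Qed.

Lemma lastmax_spec (s : seq nat) : 0 < maxpart s ->
  let l := lastmax s in
  [/\ 1 <= l <= size s, part s l = maxpart s &
      forall j, l < j <= size s -> part s j < maxpart s].
Proof.
move=> M_pos /=; set l := lastmax s.
have lmax j : 1 <= j <= size s -> part s j = maxpart s -> j <= l.
  move=> j_s Pj; apply: leq_bigmax_seq; last exact/eqP.
  by rewrite mem_index_iota; lia.
have [M0|[Ms _]] : maxpart s = 0 \/ maxpart s \in s /\ true := bigmax_attained s xpredT.
  by rewrite M0 in M_pos.
have l_pos : 0 < l.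
  have j_s : 1 <= (index (maxpart s) s).+1 <= size s by rewrite /= index_mem Ms.
  by apply: leq_trans (lmax _ j_s _); rewrite // /part /= nth_index.
have [l0|[]] : l = 0 \/ l \in index_iota 1 (size s).+1 /\ part s l == maxpart s.
    exact: bigmax_attained.
  by rewrite l0 in l_pos.
rewrite mem_index_iota => l_s /eqP lM; split => //.
move=> j j_s; rewrite ltn_neqAle part_le_maxpart ?andbT; last lia.
by apply/eqP => /(lmax j); lia.
Qed.

Section SplitAtLastMax.
Variable s : seq nat.
Hypotheses (s_pos : all (fun x => 0 < x) s) (M_pos : 0 < maxpart s).
Local Notation M := (maxpart s).
Local Notation l := (lastmax s).

Lemma split_at_lastmax : s = take l.-1 s ++ M :: drop l s.
Proof.
have [/andP[l1 ls] lM _] := lastmax_spec M_pos.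
by rewrite -{1}(cat_take_drop l.-1 s) (drop_nth 0) prednK // -lM.
Qed.

Lemma mirror_bounded_prefix : weakly_admissible s -> mirror_bounded M (take l.-1 s).
Proof.
move=> [before _]; have [/andP[l1 ls] lM _] := lastmax_spec M_pos.
apply/andP; split.
  by apply/allP => x /mem_take xs; rewrite (allP s_pos) ?leq_maxpart.
apply: mirror_pairsP => i; rewrite size_takel => [lt_i|]; last lia.
rewrite !nth_take; try lia.
have := before i.+1; rewrite lM /part /=.
have -> : (l - i.+1).-1 = l.-1 - i.+1 by lia.
by apply; lia.
Qed.

Lemma mirror_bounded_suffix : weakly_admissible s -> mirror_bounded M.-1 (drop l s).
Proof.
move=> [_ after]; have [/andP[l1 ls] lM later] := lastmax_spec M_pos.
apply/andP; split.
  apply/(all_nthP 0) => i; rewrite size_drop ltn_subRL => lt_i; rewrite nth_drop.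
  have pos : 0 < nth 0 s (l + i) by rewrite (allP s_pos) // mem_nth.
  have := later (l + i).+1; rewrite /part /= pos; lia.
apply: mirror_pairsP => i; rewrite size_drop => lt_i; rewrite !nth_drop.
have := after i.+1; rewrite lM /part /=.
have -> : (l + i.+1).-1 = l + i by lia.
have -> : ((size s).+1 - i.+1).-1 = l + (size s - l - i.+1) by lia.
by move=> /(_ _); lia.
Qed.

End SplitAtLastMax.

Definition wa_candidates (g : nat) : seq (seq nat) :=
  flatten [seq flatten [seq [seq P ++ M :: Q | P <- mirror_enum M g n1,
                                               Q <- mirror_enum M.-1 g (g - M - n1)]
                       | n1 <- iota 0 (g - M).+1]
          | M <- iota 6 (g - 5)].

Lemma mem_wa_candidates (s : seq nat) :
  all (fun x => 0 < x) s -> weakly_admissible s -> 6 <= maxpart s ->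
  s \in wa_candidates (sumn s).
Proof.
move=> s_pos s_wa M6; have M_pos : 0 < maxpart s by lia.
have s_eq := split_at_lastmax M_pos.
have P_ok := mirror_bounded_prefix s_pos M_pos s_wa.
have Q_ok := mirror_bounded_suffix s_pos M_pos s_wa.
move: s_eq P_ok Q_ok; set M := maxpart s; set P := take _ s; set Q := drop _ s.
move=> s_eq P_ok Q_ok.
have size_s := size_le_sumn s_pos.
have sum_s : sumn s = sumn P + M + sumn Q by rewrite {1}s_eq sumn_cat /=; lia.
have size_s' : size s = size P + (size Q).+1 by rewrite {1}s_eq size_cat.
apply/flatten_mapP; exists M; first by rewrite mem_iota; lia.
apply/flatten_mapP; exists (sumn P); first by rewrite mem_iota; lia.
rewrite {1}s_eq; apply/allpairsP; exists (P, Q); split => //=.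
  by apply: mem_mirror_enum => //; lia.
by rewrite (_ : _ - _ - _ = sumn Q); [apply: mem_mirror_enum => //; lia | lia].
Qed.

(* Compositions of [g] are listed without repetition, so [w_g] is at most
   the number of candidates. *)
Lemma w_count_le g : w_count g <= size (wa_candidates g).
Proof.
rewrite /w_count -size_filter; apply: uniq_leq_size; first exact/filter_uniq/comps_fuel_uniq.
move=> s; rewrite mem_filter => /andP[/andP[/asboolP s_wa M6] s_comp].
have [s_pos <-] := comps_fuel_mem s_comp.
exact: mem_wa_candidates.
Qed.

Lemma size_flatten_map (A B : Type) (F : A -> seq B) (s : seq A) :
  size (flatten (map F s)) = \sum_(x <- s) size (F x).
Proof. by elim: s => [|a s IH]; rewrite ?big_nil ?big_cons //= size_cat IH. Qed.

Lemma size_wa_candidates g : size (wa_candidates g) =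
  \sum_(M <- iota 6 (g - 5)) \sum_(n1 <- iota 0 (g - M).+1)
     size (mirror_enum M g n1) * size (mirror_enum M.-1 g (g - M - n1)).
Proof.
rewrite size_flatten_map; apply: eq_bigr => M _.
by rewrite size_flatten_map; apply: eq_bigr => n1 _; rewrite size_allpairs.
Qed.

(* The NSG inequalities, specialised at the last maximum, are exactly the
   defining inequalities of weak admissibility. *)
Lemma nsg_weakly_admissible (s : seq nat) :
  0 < maxpart s -> nsg_composition s -> weakly_admissible s.
Proof.
move=> M_pos nsg; have [/andP[l1 ls] _ _] := lastmax_spec M_pos.
split=> i /andP[i1 il].
- have [|||+ _] := nsg i (lastmax s - i); try lia.
  by rewrite subnKC //; lia.
- have [|||_] := nsg ((size s).+1 - lastmax s - i) i; try lia.
  rewrite (_ : _ - _ - i = lastmax s); last lia.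
  rewrite (_ : _ - _ = lastmax s + i); lia.
Qed.

Lemma nsg_count_le g : nsg_count g <= w_count g.
Proof.
apply: sub_count => s /andP[/asboolP nsg M6].
by rewrite M6 andbT; apply/asboolP; apply: nsg_weakly_admissible => //; lia.
Qed.

Section PairWeights.
Local Open Scope ring_scope.
Import Order.TTheory GRing.Theory Num.Theory.
Variable R : realType.

(* The generating weight of the outer pairs at [z]; when it is below [1]
   the mirror-bounded sequences of sum [n] number O(z^-n). *)
Definition pair_weight (z : R) (T : nat) : R :=
  \sum_(p <- outer_pairs T) z ^+ (p.1 + p.2).

(* Induction on the fuel with [C = 2/e]: the recursion contributes at most
   [C z^-n (1 - e)], and the two base entries fill the remaining
   [C z^-n e = 2 z^-n >= 2]. *)
Lemma mirror_enum_bound (z e : R) T : 0 < z < 1 -> 0 < e ->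
  pair_weight z T <= 1 - e ->
  forall f n, (size (mirror_enum T f n))%:R <= 2 / e * z^-1 ^+ n.
Proof.
move=> /andP[z0 z1] e0 weight_le.
have z_unit : z^-1 \is a GRing.unit by rewrite unitfE invr_eq0 gt_eqF.
have pow_ge1 n : 1 <= z^-1 ^+ n by rewrite exprn_ege1 // invf_ge1 // ltW.
have e_le1 : e <= 1.
  suff : 0 <= pair_weight z T by lra.
  by apply: sumr_ge0 => p _; rewrite exprn_ge0 // ltW.
have C0 : 0 <= 2 / e by rewrite divr_ge0 // ltW.
elim=> [|f IH] n.
  by rewrite /= -[2%:R]mulr1 ler_pM // ler_pdivlMr //; lra.
set C := 2 / e * z^-1 ^+ n.
have part_weight : \sum_(p <- outer_pairs T | (p.1 + p.2 <= n)%N) z ^+ (p.1 + p.2) <= 1 - e.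
  apply: le_trans weight_le; rewrite [leRHS](bigID (fun p => p.1 + p.2 <= n)%N) lerDl.
  by apply: sumr_ge0 => p _; rewrite exprn_ge0 // ltW.
have recurse : \sum_(p <- outer_pairs T | (p.1 + p.2 <= n)%N)
    (size (mirror_enum T f (n - (p.1 + p.2))))%:R
    <= C * \sum_(p <- outer_pairs T | (p.1 + p.2 <= n)%N) z ^+ (p.1 + p.2).
  rewrite mulr_sumr; apply: ler_sum => p le_pn; apply: le_trans (IH _) _.
  by rewrite exprB // [_ ^+ (_ + _)]exprVn invrK mulrA.
have C_ge0 : 0 <= C by rewrite mulr_ge0 // exprn_ge0 // invr_ge0 ltW.
have Ce : C * (1 - e) = C - 2 * z^-1 ^+ n by rewrite /C; field; rewrite gt_eqF.
have := ler_wpM2l C_ge0 part_weight; rewrite Ce => scaled.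
rewrite size_mirror_enum -addn2 natrD natr_sum.
have := pow_ge1 n; lra.
Qed.

Lemma geometric_tail (z : R) k m n : 0 <= z < 1 ->
  \sum_(b <- iota m n | (k <= b)%N) z ^+ b <= z ^+ maxn m k / (1 - z).
Proof.
move=> /andP[z0 z1]; have z1' : 0 < 1 - z by lra.
elim: n m => [|n IH] m.
  by rewrite big_nil divr_ge0 ?exprn_ge0 // ltW.
rewrite [iota _ _]/= big_cons; case: (leqP k m) => [km|mk].
- have -> : z ^+ m / (1 - z) = z ^+ m + z ^+ m.+1 / (1 - z).
    by rewrite exprS; field; rewrite gt_eqF.
  by rewrite lerD2l (le_trans (IH _)) // (maxn_idPl _) // ltnW.
- by rewrite (le_trans (IH _)) // (maxn_idPr _).
Qed.

(* A crude bound: at most [T] values of the first part, each followed by a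
   geometric tail of last parts starting at [T - a]. *)
Lemma pair_weight_le (z : R) T : 0 < z < 1 ->
  pair_weight z T <= T%:R * (z ^+ T / (1 - z)).
Proof.
move=> /andP[z0 z1].
rewrite /pair_weight /outer_pairs big_filter big_mkcond big_allpairs /=.
have -> : T%:R * (z ^+ T / (1 - z)) = \sum_(1 <= a < T.+1) z ^+ T / (1 - z).
  by rewrite sumr_const_nat subn1 mulr_natl.
have -> : iota 1 T = index_iota 1 T.+1 by rewrite /index_iota subSS subn0.
rewrite !big_seq; apply: ler_sum => a; rewrite mem_iota => /andP[a1 aT].
rewrite -big_mkcond /= (eq_bigr (fun b => z ^+ a * z ^+ b)); last by move=> b _; rewrite exprD.
rewrite (eq_bigl (fun b => T - a <= b)%N); last by move=> b /=; lia.
rewrite -mulr_sumr /index_iota subSS subn0.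
have z01 : 0 <= z < 1 by rewrite ltW.
apply: le_trans (ler_wpM2l (exprn_ge0 _ (ltW z0)) (geometric_tail (T - a) 1 T z01)) _.
rewrite mulrA -exprD ler_wpM2r ?invr_ge0 ?subr_ge0 ?(ltW z1) //.
by apply: ler_wiXn2l; [exact: ltW | exact: ltW | lia].
Qed.

(* [T z^T] decreases in [T >= 6] as long as [z <= 6/7]. *)
Lemma mulr_nat_expr_le (z : R) T : 0 <= z -> z <= 6 / 7 -> (6 <= T)%N ->
  T%:R * z ^+ T <= 6 * z ^+ 6.
Proof.
move=> z0 z67; elim: T => // T IH; rewrite leq_eqVlt => /orP[/eqP <- //|].
rewrite ltnS => T6; apply: le_trans (IH T6).
rewrite exprS mulrA -natr1 ler_wpM2r ?exprn_ge0 //.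
have : 6 <= T%:R :> R by rewrite (ler_nat R 6 T).
nra.
Qed.

Lemma pair_weight_le6 (z : R) T : 0 < z -> z <= 6 / 7 -> (6 <= T)%N ->
  pair_weight z T <= 6 * z ^+ 6 / (1 - z).
Proof.
move=> z0 z67 T6; apply: le_trans (pair_weight_le T _) _; first lra.
by rewrite mulrA ler_wpM2r ?invr_ge0 ?mulr_nat_expr_le //; lra.
Qed.

(* The two numerical instances: before the last maximum [M >= 6] the parts
   are bounded by [M], after it by [M - 1 >= 5]. *)
Lemma pair_weight_prefix T : (6 <= T)%N -> pair_weight (5 / 8) T <= 1 - 1 / 25.
Proof.
move=> T6; apply: le_trans (pair_weight_le6 _ _ T6) _; try lra.
by rewrite ler_pdivrMr ?expr_div_n; lra.
Qed.

Lemma pair_weight_suffix T : (5 <= T)%N -> pair_weight (13 / 21) T <= 1 - 1 / 20.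
Proof.
rewrite leq_eqVlt => /orP[/eqP <-|T6].
  by rewrite /pair_weight /outer_pairs /= !big_cons big_nil /= !exprS expr0; lra.
apply: le_trans (pair_weight_le6 _ _ T6) _; try lra.
by rewrite ler_pdivrMr ?expr_div_n; lra.
Qed.

End PairWeights.

Section Bounds.
Local Open Scope ring_scope.
Import Order.TTheory GRing.Theory Num.Theory.
Variable R : realType.

Lemma geometric_le (q : R) a n : 0 <= q < 1 -> \sum_(i <- iota a n) q ^+ i <= (1 - q)^-1.
Proof.
move=> /andP[q0 q1]; have q01 : 0 <= q < 1 by rewrite q0.
apply: le_trans (geometric_tail 0 a n q01) _.
rewrite maxn0 -[leRHS]mul1r ler_wpM2r //; first by rewrite invr_ge0; lra.
by rewrite exprn_ile1 // ltW.
Qed.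

(* Rates for the parts before and after the last maximum.  Their quotient
   [ratio = z_suffix / z_prefix = 104/105] is below 1, so the sum over the
   sum of the prefix is geometric. *)
Definition z_prefix : R := 5 / 8.
Definition z_suffix : R := 13 / 21.
Definition ratio : R := z_prefix^-1 * z_suffix.
Definition pair_const : R := 2 / (1 / 25) * (2 / (1 / 20)).
Definition w_const : R := pair_const / (1 - z_suffix) / (1 - ratio).

Lemma ratio_lt1 : 0 <= ratio < 1.
Proof. by rewrite /ratio /z_prefix /z_suffix invf_div; apply/andP; split; lra. Qed.

Lemma z_suffix_lt1 : 0 <= z_suffix < 1.
Proof. by rewrite /z_suffix; apply/andP; split; lra. Qed.

Lemma candidate_count_le g M n1 : (6 <= M)%N -> (M + n1 <= g)%N ->
  (size (mirror_enum M g n1) * size (mirror_enum M.-1 g (g - M - n1)))%:R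
   <= pair_const * z_suffix^-1 ^+ g * (z_suffix ^+ M * ratio ^+ n1).
Proof.
move=> M6 n1_le.
have zp : 0 < z_prefix < 1 by rewrite /z_prefix; apply/andP; split; lra.
have zs : 0 < z_suffix < 1 by rewrite /z_suffix; apply/andP; split; lra.
have M5 : (5 <= M.-1)%N by lia.
have prefix := mirror_enum_bound zp (_ : 0 < 1 / 25) (pair_weight_prefix R M6) g n1.
have suffix := mirror_enum_bound zs (_ : 0 < 1 / 20) (pair_weight_suffix R M5) g (g - M - n1).
rewrite natrM; apply: le_trans (ler_pM (ler0n _ _) (ler0n _ _) (prefix _) (suffix _)) _;
  [lra | lra |].
rewrite -subnDA exprB //; last by rewrite unitfE invr_eq0 gt_eqF //; case/andP: zs.
have [sp0 sn0] : z_prefix != 0 /\ z_suffix != 0.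
  by case/andP: zp => /gt_eqF-> _; case/andP: zs => /gt_eqF-> _.
rewrite /pair_const /ratio [(_ * _) ^+ n1]exprMn exprD !exprVn le_eqVlt; apply/orP; left.
by apply/eqP; field; rewrite !expf_neq0.
Qed.

(* [w_g = O((21/13)^g)]: sum the candidate counts, first over the prefix sum
   (a geometric series of ratio [ratio]), then over the maximum (a geometric
   series of ratio [z_suffix]). *)
Lemma w_count_bound g : (w_count g)%:R <= w_const * z_suffix^-1 ^+ g.
Proof.
have [r0 r1] := andP ratio_lt1; have [s0 s1] := andP z_suffix_lt1.
set C := pair_const * z_suffix^-1 ^+ g.
have C_ge0 : 0 <= C by rewrite mulr_ge0 ?exprn_ge0 ?invr_ge0 // /pair_const; lra.
have by_max M : M \in iota 6 (g - 5) ->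
    (\sum_(n1 <- iota 0 (g - M).+1)
       size (mirror_enum M g n1) * size (mirror_enum M.-1 g (g - M - n1)))%:R
    <= C / (1 - ratio) * z_suffix ^+ M.
  rewrite mem_iota => /andP[M6 Mg]; rewrite natr_sum.
  apply: le_trans (_ : \sum_(n1 <- iota 0 (g - M).+1) C * z_suffix ^+ M * ratio ^+ n1 <= _).
    rewrite !big_seq; apply: ler_sum => n1; rewrite mem_iota => /andP[_ n1_le].
    by rewrite -mulrA candidate_count_le //; lia.
  rewrite -mulr_sumr [leRHS]mulrAC ler_wpM2l ?mulr_ge0 ?exprn_ge0 ?invr_ge0 //.
  exact: geometric_le ratio_lt1.
apply: le_trans (_ : (size (wa_candidates g))%:R <= _); first by rewrite ler_nat w_count_le.
rewrite size_wa_candidates natr_sum.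
apply: le_trans (_ : \sum_(M <- iota 6 (g - 5)) C / (1 - ratio) * z_suffix ^+ M <= _).
  by rewrite !big_seq; apply: ler_sum.
rewrite -mulr_sumr; apply: le_trans (ler_wpM2l _ (geometric_le _ _ z_suffix_lt1)) _.
  by rewrite mulr_ge0 // invr_ge0 subr_ge0 ltW.
rewrite /w_const /C le_eqVlt; apply/orP; left; apply/eqP.
by field; rewrite !subr_eq0 !(gt_eqF r1, gt_eqF s1).
Qed.

Lemma nsg_count_bound g : (nsg_count g)%:R <= w_const * z_suffix^-1 ^+ g.
Proof. by apply: le_trans (w_count_bound g); rewrite ler_nat nsg_count_le. Qed.

End Bounds.

Section GrowthRate.
Local Open Scope ring_scope.
Import Order.TTheory GRing.Theory Num.Theory.
Variable R : realType.

Lemma bernoulli_ineq (x : R) n : 0 <= x -> 1 + n%:R * x <= (1 + x) ^+ n.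
Proof.
move=> x0; elim: n => [|n IH]; first by rewrite mul0r addr0 expr0.
have step : (1 + x) * (1 + n%:R * x) <= (1 + x) ^+ n.+1.
  by rewrite exprS ler_wpM2l //; lra.
have : 0 <= x * (n%:R * x) by rewrite !mulr_ge0.
rewrite -natr1; nra.
Qed.

Lemma root_le (K c a : R) g : 0 < K -> 0 <= c -> (0 < g)%N -> 0 <= a ->
  a <= K * c ^+ g -> a `^ g%:R^-1 <= c * (1 + K / g%:R).
Proof.
move=> K0 c0 g0 a0 a_le; have gR : 0 < g%:R :> R by rewrite ltr0n.
have y0 : 0 <= c * (1 + K / g%:R) by rewrite mulr_ge0 ?addr_ge0 ?divr_ge0 //; lra.
have a_le_pow : a <= (c * (1 + K / g%:R)) ^+ g.
  apply: le_trans a_le _; rewrite exprMn mulrC ler_wpM2l ?exprn_ge0 //.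
  apply: le_trans (bernoulli_ineq _ _) ; last by rewrite divr_ge0 // ltW.
  by rewrite mulrC divfK ?gt_eqF //; lra.
apply: le_trans (ge0_ler_powR _ _ _ a_le_pow) _; rewrite ?nnegrE ?exprn_ge0 ?invr_ge0 //.
by rewrite -powR_mulrn // -powRrM mulfV ?gt_eqF // powRr1.
Qed.

(* A sequence [a_g <= K c^g] with [c >= 0] has growth rate at most any [d > c]:
   beyond [N > K c / (d - c)] every root [a_g^(1/g)] is below [d], and the
   limsup is bounded by the supremum over that tail. *)
Lemma growth_rate_le (a : nat -> nat) (K c d : R) : 0 < K -> 0 <= c -> c < d ->
  (forall g, (a g)%:R <= K * c ^+ g) -> (growth_rate R a <= d%:E)%E.
Proof.
move=> K0 c0 cd a_le; set N := Num.Def.archi_bound (K * c / (d - c)).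
have N_gt : K * c / (d - c) < N%:R.
  by apply: archi_boundP; rewrite divr_ge0 ?mulr_ge0 ?subr_ge0 // ltW.
apply: (@le_trans _ _ (ereal_sup ((fun g => (((a g)%:R : R) `^ g%:R^-1)%:E) @`
                                   [set g : nat | (N < g)%N]%classic))).
  apply: ereal_inf_lbound; exists [set g : nat | (N < g)%N]%classic => //.
  by exists N.+1.
apply: ge_ereal_sup => _ [g /= Ng <-]; rewrite lee_fin.
have gR : 0 < g%:R :> R by rewrite ltr0n; lia.
apply: le_trans (root_le K0 c0 _ (ler0n _ _) (a_le g)) _; first lia.
have : K * c / (d - c) < g%:R by apply: lt_trans N_gt _; rewrite ltr_nat.
rewrite ltr_pdivrMr ?subr_gt0 // => lt_g.
have : c * K / g%:R <= d - c by rewrite ler_pdivrMr //; lra.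
by rewrite mulrDr mulr1 mulrA; lra.
Qed.

End GrowthRate.

Section Constants.
Local Open Scope ring_scope.
Import Order.TTheory GRing.Theory Num.Theory.
Variable R : realType.

Lemma golden_gt : (55 / 34 : R) < golden R.
Proof.
suff : (76 / 34 : R) < Num.sqrt 5 by rewrite /golden; lra.
rewrite -[X in X < _]ger0_norm ?divr_ge0 // -sqrtr_sqr ltr_sqrt; last lra.
by rewrite expr2; lra.
Qed.

Lemma z_suffix_inv : (z_suffix R)^-1 = 21 / 13.
Proof. by rewrite /z_suffix invf_div. Qed.

Lemma w_const_gt0 : 0 < w_const R.
Proof.
have [r0 r1] := andP (ratio_lt1 R); have [s0 s1] := andP (z_suffix_lt1 R).
by rewrite /w_const /pair_const !divr_gt0 ?subr_gt0 //; lra.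
Qed.

End Constants.

Local Open Scope ring_scope.
Local Open Scope ereal_scope.

Theorem proposition10p1 (R : realType) :
  growth_rate R w_count < (golden R)%:E /\
  growth_rate R nsg_count < (golden R)%:E.
Proof.
have c0 : (0 <= (z_suffix R)^-1)%R by rewrite z_suffix_inv; lra.
have cd : ((z_suffix R)^-1 < 55 / 34)%R by rewrite z_suffix_inv; lra.
have d_golden : (55 / 34 : R)%:E < (golden R)%:E by rewrite lte_fin golden_gt.
split; apply: Order.POrderTheory.le_lt_trans d_golden.
- exact: growth_rate_le (w_const_gt0 R) c0 cd (w_count_bound R).
- exact: growth_rate_le (w_const_gt0 R) c0 cd (nsg_count_bound R).
Qed.
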